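(* There exists a family $\{\pi_s(x)\}_{s\in2^{<\omega}}$ of consistent partial types over $\emptyset$ in one variable in the theory $APr_A$ such that (i) for all $s\in2^{<\omega}$, $d(\pi_{s^\frown0},\pi_{s^\frown1})\ge\frac13$, meaning that $d(a_0,a_1)\ge\frac13$ whenever $a_i\models\pi_{s^\frown i}$ for $i=0,1$; and (ii) if $s,t\in2^{<\omega}$ and $t$ extends $s$ then $\pi_t\vdash\pi_s$.
   Context: Probability algebras are continuous structures in the language $\{0,1,\cdot^c,\cup,\cap\}$ with metric $d(a,b)=\mu(a\triangle b)$; $APr_A$ is the theory of pairs (atomless probability algebra, aperiodic automorphism $\tau$), where $\tau$ is aperiodic if for every nonzero $a$ and $n>0$ some $b\le a$ has $\tau^n(b)\ne b$. $2^{<\omega}$ is the set of finite binary sequences and $s^\frown i$ denotes appending $i$. *)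

From HB Require Import structures.
From mathcomp Require Import all_boot all_order all_algebra.
From mathcomp Require Import boolp classical_sets reals.
From mathcomp Require Import Rstruct.
Import Order.TTheory GRing.Theory Num.Theory.

Set Implicit Arguments.
Unset Strict Implicit.
Unset Printing Implicit Defensive.

Local Open Scope ring_scope.
Local Open Scope classical_set_scope.

Definition Rr : realType := Rdefinitions.R.

Record PAops := {
  car :> Type;
  bzero : car;
  bone : car;
  bcompl : car -> car;
  bjoin : car -> car -> car;
  bmeet : car -> car -> car;
  mu : car -> Rr;
  tau : car -> car;
  tau_inv : car -> car
}.
Arguments bzero : clear implicits.
Arguments bone : clear implicits.
Arguments mu : clear implicits.
Arguments tau : clear implicits.
Arguments tau_inv : clear implicits.

Definition ble (M : PAops) (a b : M) : Prop := bmeet a b = a.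

Definition pdist (M : PAops) (a b : M) : Rr :=
  mu M (bjoin (bmeet a (bcompl b)) (bmeet (bcompl a) b)).

Record is_APrA_model (M : PAops) : Prop := {
  joinC : forall a b : M, bjoin a b = bjoin b a;
  meetC : forall a b : M, bmeet a b = bmeet b a;
  joinA : forall a b c : M, bjoin a (bjoin b c) = bjoin (bjoin a b) c;
  meetA : forall a b c : M, bmeet a (bmeet b c) = bmeet (bmeet a b) c;
  joinKmeet : forall a b : M, bjoin a (bmeet a b) = a;
  meetKjoin : forall a b : M, bmeet a (bjoin a b) = a;
  join_meetD : forall a b c : M, bjoin a (bmeet b c) = bmeet (bjoin a b) (bjoin a c);
  meet_joinD : forall a b c : M, bmeet a (bjoin b c) = bjoin (bmeet a b) (bmeet a c);
  join_compl : forall a : M, bjoin a (bcompl a) = bone M;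
  meet_compl : forall a : M, bmeet a (bcompl a) = bzero M;
  mu_one : mu M (bone M) = 1;
  mu_ge0 : forall a : M, 0 <= mu M a;
  mu_add : forall a b : M, bmeet a b = bzero M -> mu M (bjoin a b) = mu M a + mu M b;
  mu_pos : forall a : M, mu M a = 0 -> a = bzero M;
  pdist_complete : forall u : nat -> M,
    (forall e : Rr, 0 < e -> exists N, forall m n, (N <= m)%N -> (N <= n)%N ->
        pdist (u m) (u n) < e) ->
    exists a : M, forall e : Rr, 0 < e -> exists N, forall n, (N <= n)%N ->
        pdist (u n) a < e;
  atomless : forall a : M, a <> bzero M ->
    exists b : M, ble b a /\ 0 < mu M b /\ mu M b < mu M a;
  tau_invK : forall a : M, tau_inv M (tau M a) = a;
  tauK : forall a : M, tau M (tau_inv M a) = a;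
  tau_zero : tau M (bzero M) = bzero M;
  tau_one : tau M (bone M) = bone M;
  tau_compl : forall a : M, tau M (bcompl a) = bcompl (tau M a);
  tau_join : forall a b : M, tau M (bjoin a b) = bjoin (tau M a) (tau M b);
  tau_meet : forall a b : M, tau M (bmeet a b) = bmeet (tau M a) (tau M b);
  tau_mu : forall a : M, mu M (tau M a) = mu M a;
  aperiodic : forall a : M, a <> bzero M -> forall n : nat, (0 < n)%N ->
    exists b : M, ble b a /\ iter n (tau M) b <> b
}.

Record APrA_model := {
  mops :> PAops;
  maxioms : is_APrA_model mops
}.

(* Continuous-logic syntax (full system of connectives 1, 1-x, x/2,   *)
(* x -. y, and quantifiers sup / inf), no parameters                  *)

Inductive term :=
| TVar of nat
| TZero
| TOne
| TCompl of term
| TJoin of term & term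
| TMeet of term & term
| TTau of term
| TTauInv of term.

Inductive formula :=
| FDist of term & term
| FOne
| FNeg of formula
| FHalf of formula
| FMinus of formula & formula
| FSup of nat & formula
| FInf of nat & formula.

Fixpoint tfv_sub (S : nat -> bool) (t : term) : Prop :=
  match t with
  | TVar n => S n
  | TZero | TOne => True
  | TCompl t | TTau t | TTauInv t => tfv_sub S t
  | TJoin t u | TMeet t u => tfv_sub S t /\ tfv_sub S u
  end.

Fixpoint fv_sub (S : nat -> bool) (phi : formula) : Prop :=
  match phi with
  | FDist t u => tfv_sub S t /\ tfv_sub S u
  | FOne => True
  | FNeg p | FHalf p => fv_sub S p
  | FMinus p q => fv_sub S p /\ fv_sub S q
  | FSup n p | FInf n p => fv_sub (fun k => (k == n) || S k) p
  end.

Definition upd (M : PAops) (e : nat -> M) (n : nat) (a : M) : nat -> M :=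
  fun k => if k == n then a else e k.

Fixpoint teval (M : PAops) (e : nat -> M) (t : term) : M :=
  match t with
  | TVar n => e n
  | TZero => bzero M
  | TOne => bone M
  | TCompl t => bcompl (teval e t)
  | TJoin t u => bjoin (teval e t) (teval e u)
  | TMeet t u => bmeet (teval e t) (teval e u)
  | TTau t => tau M (teval e t)
  | TTauInv t => tau_inv M (teval e t)
  end.

Fixpoint feval (M : PAops) (e : nat -> M) (phi : formula) : Rr :=
  match phi with
  | FDist t u => pdist (teval e t) (teval e u)
  | FOne => 1
  | FNeg p => 1 - feval e p
  | FHalf p => feval e p / 2
  | FMinus p q => Num.max (feval e p - feval e q) 0
  | FSup n p => sup [set feval (upd e n a) p | a in [set: car M]]
  | FInf n p => inf [set feval (upd e n a) p | a in [set: car M]]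
  end.

(* A partial type is a set of conditions "phi(x) = 0".                *)

Definition ptype := formula -> Prop.

Definition one_var_ptype (p : ptype) : Prop :=
  forall phi, p phi -> fv_sub (pred1 0%N) phi.

Definition realizes (M : APrA_model) (a : M) (p : ptype) : Prop :=
  forall phi, p phi -> feval (fun _ => a) phi = 0.

Definition consistent (p : ptype) : Prop :=
  exists (M : APrA_model) (a : M), realizes a p.

Definition entails (p1 p2 : ptype) : Prop :=
  forall (M : APrA_model) (a : M), realizes a p1 -> realizes a p2.

Definition ptype_dist_ge (p0 p1 : ptype) (r : Rr) : Prop :=
  forall (M : APrA_model) (a0 a1 : M),
    realizes a0 p0 -> realizes a1 p1 -> r <= pdist a0 a1.

From HB Require Import structures.
From Pilot Require Import Defs.
From mathcomp Require Import all_boot all_order all_algebra.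
From mathcomp Require Import boolp classical_sets reals ereal sequences measure.
From mathcomp Require Import lebesgue_measure measurable_realfun trigo pi_irrational.
From mathcomp Require Import Rstruct ring lra zify.
From Stdlib Require Import Classical ClassicalEpsilon.
Import Order.TTheory GRing.Theory Num.Theory.

Set Implicit Arguments.
Unset Strict Implicit.
Unset Printing Implicit Defensive.

Local Open Scope ring_scope.

(* The type pi_s says of x that, for every k < |s|, the displacement
   d(x, tau^(16^k) x) is at most 1/8 when s_k = 0 and at least 7/8 when s_k = 1.
   Extending s only adds conditions, which gives (ii).  For (i), by the triangle
   inequality through tau^m a0, two elements whose displacements by tau^m differ
   by 3/4 are at distance at least 3/8.
   Each pi_s is realized in the measure algebra of [0,1) with the rotation by an
   angle alpha whose base-16 digits start with 8 s_0, 8 s_1, ..., followed by a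
   small multiple of the irrational number pi: then 16^k alpha lies within 1/16
   of s_k/2 modulo 1, so the class of [0,1/2) has displacement at most 1/8 or at
   least 7/8 as required, and irrationality of alpha makes the rotation
   aperiodic. *)

(** * Distance in a probability algebra *)

Section ProbabilityAlgebraMetric.
Variable M : PAops.
Hypothesis HM : is_APrA_model M.

Local Notation "a ∧ b" := (bmeet a b) (at level 40, left associativity).
Local Notation "a ∨ b" := (bjoin a b) (at level 50, left associativity).
Local Notation "a '" := (bcompl a) (at level 2, format "a '").
Let mA := Defs.meetA HM.
Let mC := Defs.meetC HM.
Let jC := Defs.joinC HM.
Let jKm := Defs.joinKmeet HM.
Let mKj := Defs.meetKjoin HM.
Let mjD := Defs.meet_joinD HM.

Lemma bmeet1 (a : M) : a ∧ bone M = a.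
Proof. by rewrite -(join_compl HM a) mKj. Qed.

Lemma bmeetxx (a : M) : a ∧ a = a.
Proof. by rewrite -{2}(jKm a a) mKj. Qed.

Lemma bmeet0 (a : M) : a ∧ bzero M = bzero M.
Proof. by rewrite -(meet_compl HM a) mA bmeetxx. Qed.

Lemma bjoin0 (a : M) : a ∨ bzero M = a.
Proof. by rewrite -(meet_compl HM a) jKm. Qed.

Lemma bcomplK (a : M) : a ' ' = a.
Proof.
have e1 := bmeet1 (a ' ').
rewrite -(join_compl HM a) mjD [a ' ' ∧ a ']mC (meet_compl HM) bjoin0 in e1.
have e2 := bmeet1 a.
rewrite -(join_compl HM (a ')) mjD (meet_compl HM) jC bjoin0 in e2.
by rewrite -[LHS]e1 mC e2.
Qed.

Lemma bcompl_meet (a : M) : a ' ∧ a = bzero M.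
Proof. by rewrite mC meet_compl. Qed.

Lemma mu_split (c y : M) : mu M c = mu M (c ∧ y) + mu M (c ∧ y ').
Proof.
rewrite -(mu_add HM); last by rewrite -mA [y ∧ _]mC -!mA bcompl_meet !bmeet0.
by rewrite -mjD join_compl // bmeet1.
Qed.

Lemma mu_meet_le (a b : M) : mu M (a ∧ b) <= mu M a.
Proof. rewrite [leRHS](mu_split a b) lerDl; exact: mu_ge0. Qed.

Lemma pdistE (x z : M) : pdist x z = mu M (x ∧ z ') + mu M (x ' ∧ z).
Proof.
rewrite /pdist (mu_add HM) //.
by rewrite [x ' ∧ z]mC -!mA [z ' ∧ (z ∧ _)]mA bcompl_meet [bzero M ∧ _]mC !bmeet0.
Qed.

Lemma mu_meet_triangle (x y z : M) :
  mu M (x ∧ z) <= mu M (x ∧ y ') + mu M (y ∧ z).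
Proof.
rewrite (mu_split (x ∧ z) y).
have -> : x ∧ z ∧ y = y ∧ z ∧ x.
  by rewrite -mA [z ∧ y]mC mA [x ∧ y]mC -mA [x ∧ z]mC.
have -> : x ∧ z ∧ y ' = x ∧ y ' ∧ z by rewrite -!mA [z ∧ _]mC.
by rewrite addrC; apply: lerD; apply: mu_meet_le.
Qed.

Lemma pdist_triangle (x y z : M) : pdist x z <= pdist x y + pdist y z.
Proof.
rewrite !pdistE.
have := mu_meet_triangle x y (z '); have := mu_meet_triangle (x ') (y ') z.
rewrite bcomplK; lra.
Qed.

Lemma pdistC (x y : M) : pdist x y = pdist y x.
Proof. by rewrite !pdistE addrC [y ∧ _]mC [y ' ∧ _]mC. Qed.

Lemma pdist_tau (x y : M) : pdist (tau M x) (tau M y) = pdist x y.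
Proof.
by rewrite /pdist -!(tau_compl HM) -!(tau_meet HM) -(tau_join HM) (tau_mu HM).
Qed.

Lemma pdist_iter_tau n (x y : M) :
  pdist (iter n (tau M) x) (iter n (tau M) y) = pdist x y.
Proof. by elim: n => //= n IH; rewrite pdist_tau. Qed.

Lemma displacement_sub_le (a0 a1 : M) m :
  pdist a1 (iter m (tau M) a1) - pdist a0 (iter m (tau M) a0) <= 2 * pdist a0 a1.
Proof.
have t1 := pdist_triangle a1 a0 (iter m (tau M) a1).
have t2 := pdist_triangle a0 (iter m (tau M) a0) (iter m (tau M) a1).
rewrite pdist_iter_tau in t2; rewrite (pdistC a1 a0) in t1.
lra.
Qed.

End ProbabilityAlgebraMetric.

(** * The types pi_s *)

Fixpoint tau_iter_term (m : nat) : term :=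
  if m is m'.+1 then TTau (tau_iter_term m') else TVar 0.

Definition eighth : formula := FHalf (FHalf (FHalf FOne)).

Definition displacement_cond (k : nat) (b : bool) : formula :=
  if b then FMinus (FNeg eighth) (FDist (TVar 0) (tau_iter_term (16 ^ k)))
  else FMinus (FDist (TVar 0) (tau_iter_term (16 ^ k))) eighth.

Definition pi_of (s : seq bool) : ptype :=
  fun phi => exists2 k, (k < size s)%N & phi = displacement_cond k (nth false s k).

Definition displaced (M : PAops) (a : M) (k : nat) (b : bool) : Prop :=
  if b then 7 / 8 <= pdist a (iter (16 ^ k) (tau M) a)
  else pdist a (iter (16 ^ k) (tau M) a) <= 8^-1.

Lemma teval_tau_iter_term (M : PAops) (a : M) m :
  teval (fun _ => a) (tau_iter_term m) = iter m (tau M) a.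
Proof. by elim: m => //= m ->. Qed.

Lemma tfv_tau_iter_term m : tfv_sub (pred1 0%N) (tau_iter_term m).
Proof. by elim: m. Qed.

Lemma maxr0_eq0 (x : Rr) : Num.max x 0 = 0 <-> x <= 0.
Proof.
split => [h|/max_idPr //].
by have := le_max x x 0; rewrite lexx h /= => ->.
Qed.

Lemma feval_displacement_cond (M : PAops) (a : M) k b :
  feval (fun _ => a) (displacement_cond k b) = 0 <-> displaced a k b.
Proof.
rewrite /displacement_cond /displaced.
by case: b => /=; rewrite teval_tau_iter_term maxr0_eq0; split => h; lra.
Qed.

Lemma realizes_pi_of (M : APrA_model) (a : M) s :
  realizes a (pi_of s) <->
  (forall k, (k < size s)%N -> displaced a k (nth false s k)).
Proof.
split => [h k hk | h _ [k hk ->]]; apply/feval_displacement_cond; last exact: h.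
by apply: h; exists k.
Qed.

Lemma pi_of_one_var s : one_var_ptype (pi_of s).
Proof.
move=> _ [k _ ->]; rewrite /displacement_cond.
by case: (nth _ _ _); do !split; apply: tfv_tau_iter_term.
Qed.

Lemma pi_of_prefix s t : prefix s t -> entails (pi_of t) (pi_of s).
Proof.
move=> /prefixP [u ->] M a /realizes_pi_of h; apply/realizes_pi_of => k hk.
by have := h k; rewrite size_cat nth_cat hk; apply; exact: ltn_addr.
Qed.

Lemma pi_of_rcons_dist_ge s :
  ptype_dist_ge (pi_of (rcons s false)) (pi_of (rcons s true)) 3^-1.
Proof.
move=> M a0 a1 /realizes_pi_of h0 /realizes_pi_of h1.
have := h0 (size s); have := h1 (size s).
rewrite /displaced !size_rcons !nth_rcons ltnn eqxx ltnSn => /(_ isT) d1 /(_ isT) d0.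
have := displacement_sub_le (maxioms M) a0 a1 (16 ^ size s); lra.
Qed.

(** * Null sets and rotations of [0,1) *)

Local Open Scope classical_set_scope.

Notation lam := (@lebesgue_measure Rr).

Definition I01 : set Rr := `[0, 1[%classic.
Definition symd (A B : set Rr) := (A `\` B) `|` (B `\` A).
Definition msub (A : set Rr) := measurable A /\ A `<=` I01.

(* Case analysis on the membership of x in every set that is applied to x,
   followed by propositional reasoning. *)
Ltac add_cases x :=
  repeat match goal with
  | |- context [?S x] => lazymatch goal with
    | _ : S x \/ ~ S x |- _ => fail | _ => have := classic (S x); intro end
  | H : context [?S x] |- _ => lazymatch goal with
    | _ : S x \/ ~ S x |- _ => fail | _ => have := classic (S x); intro end
  end.

Ltac set_tauto_at x :=
  unfold symd, setU, setI, setD, setC, subset in *; simpl in *; add_cases x; tauto.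
Ltac set_tauto := let x := fresh "x" in move=> x; set_tauto_at x.

Lemma I01E x : I01 x <-> 0 <= x /\ x < 1.
Proof. by rewrite /I01 /= in_itv /=; split => [/andP[]|[-> ->]]. Qed.

Lemma msub0 : msub set0.
Proof. by split. Qed.

Lemma msubI01 : msub I01.
Proof. by split => //; exact: measurable_itv. Qed.

Lemma msubU A B : msub A -> msub B -> msub (A `|` B).
Proof. by move=> [mA sA] [mB sB]; split; [exact: measurableU | move=> x [/sA|/sB]]. Qed.

Lemma msubI A B : msub A -> msub B -> msub (A `&` B).
Proof. by move=> [mA sA] [mB sB]; split; [exact: measurableI | move=> x [/sA]]. Qed.

Lemma msubIl A B : msub A -> measurable B -> msub (A `&` B).
Proof. by move=> [mA sA] mB; split; [exact: measurableI | move=> x [/sA]]. Qed.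

Lemma msubD A B : msub A -> msub B -> msub (A `\` B).
Proof. by move=> [mA sA] [mB sB]; split; [exact: measurableD | move=> x [/sA]]. Qed.

Lemma msubC A : msub A -> msub (I01 `\` A).
Proof. by move=> hA; apply: msubD => //; exact: msubI01. Qed.

Lemma msub_symd A B : msub A -> msub B -> msub (symd A B).
Proof. by move=> hA hB; apply: msubU; apply: msubD. Qed.

Lemma lam_ge0 A : (0 <= lam A)%E.
Proof. exact: measure_ge0. Qed.

Lemma lam_le (A B : set Rr) : measurable A -> measurable B -> A `<=` B ->
  (lam A <= lam B)%E.
Proof. by move=> mA mB AB; apply: le_measure => //; rewrite inE. Qed.

Lemma lam_subset0 (A B : set Rr) : measurable A -> measurable B -> A `<=` B ->
  lam B = 0%E -> lam A = 0%E.
Proof.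
move=> mA mB AB B0; apply/eqP; rewrite eq_le lam_ge0 andbT -B0.
exact: lam_le.
Qed.

Lemma lam_I01 : lam I01 = 1%E.
Proof. by rewrite /I01 lebesgue_measure_itv /= lte01 EFinN sube0. Qed.

Lemma lam_fin A : msub A -> lam A \is a fin_num.
Proof.
move=> [mA sA]; rewrite ge0_fin_numE ?lam_ge0 //.
apply: (le_lt_trans (lam_le mA _ sA)); first exact: measurable_itv.
by rewrite lam_I01 ltry.
Qed.

Lemma symdC A B : symd A B = symd B A.
Proof. by rewrite /symd setUC. Qed.

Lemma symd_trans A B C : symd A C `<=` symd A B `|` symd B C.
Proof. set_tauto. Qed.

Lemma symdxx A : symd A A = set0.
Proof. by apply/seteqP; split; set_tauto. Qed.

Lemma symd0 A : symd A set0 = A.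
Proof. by apply/seteqP; split; set_tauto. Qed.

Definition lam_eqv (A B : set Rr) := lam (symd A B) = 0%E.

Lemma lam_eqv_refl A : lam_eqv A A.
Proof. by rewrite /lam_eqv symdxx measure0. Qed.

Lemma lam_eqv_sym A B : lam_eqv A B -> lam_eqv B A.
Proof. by rewrite /lam_eqv symdC. Qed.

Lemma lam_eqv_trans A B C : msub A -> msub B -> msub C ->
  lam_eqv A B -> lam_eqv B C -> lam_eqv A C.
Proof.
move=> hA hB hC h1 h2.
have [mAB _] := msub_symd hA hB; have [mBC _] := msub_symd hB hC.
rewrite /lam_eqv in h1 h2 *; apply: (lam_subset0 _ _ (@symd_trans A B C)).
- by case: (msub_symd hA hC).
- exact: measurableU.
- exact: null_set_setU.
Qed.

Lemma lam_eqv_lam A B : msub A -> msub B -> lam_eqv A B -> lam A = lam B.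
Proof.
move=> hA hB h; have [mA _] := hA; have [mB _] := hB; have [mS _] := msub_symd hA hB.
have null_diff X Y : measurable X -> measurable Y -> X `\` Y `<=` symd A B ->
    lam (X `\` Y) = 0%E.
  by move=> mX mY sub; apply: (lam_subset0 _ mS sub h); exact: measurableD.
have eA : lam A = (lam (A `\` B) + lam (A `&` B))%E := measureDI lam mA mB.
have eB : lam B = (lam (B `\` A) + lam (B `&` A))%E := measureDI lam mB mA.
have nAB : lam (A `\` B) = 0%E by apply: null_diff => // x hx; left.
have nBA : lam (B `\` A) = 0%E by apply: null_diff => // x hx; right.
by rewrite eA eB nAB nBA setIC.
Qed.

Lemma measurable_fun_addr (c : Rr) :
  measurable_fun [set: measurableTypeR Rr] (fun y : measurableTypeR Rr => y + c).
Proof. by apply: measurable_funD => //; exact: measurable_cst. Qed.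

Lemma measurable_addr_preimage (c : Rr) (A : set Rr) : measurable A ->
  measurable ((fun y => y + c) @^-1` A).
Proof. by move=> mA; rewrite -[X in measurable X]setTI; exact: measurable_fun_addr. Qed.

Lemma lam_addr_preimage (c : Rr) (A : set Rr) : measurable A ->
  lam ((fun y => y + c) @^-1` A) = lam A.
Proof.
move=> mA.
(* The pushforward of lam along y |-> y + c is a measure agreeing with lam on
   intervals. *)
pose nu := measure_function_pushforward__canonical__measure_function_Measure
  (T1 := measurableTypeR Rr) (T2 := measurableTypeR Rr) lam (measurable_fun_addr c).
transitivity (nu A) => //; apply/esym.
apply: lebesgue_measure_unique mA => _ [[a b] _ <-] /=.
rewrite -[RHS]/(lam ((fun y : Rr => y + c) @^-1` `]a, b]%classic)).
rewrite (_ : _ @^-1` _ = `]a - c, b - c]%classic); last first.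
  by apply/seteqP; split => x /=; rewrite !in_itv /= ?lerBrDr ?ltrBlDr.
rewrite !lebesgue_measure_itv /= !lte_fin ltrBrDr subrK; congr (if _ then _ else _).
by rewrite EFinB; congr (_%:E); ring.
Qed.

Definition frac (x : Rr) : Rr := x - (Num.floor x)%:~R.

Lemma frac_I01 x : I01 (frac x).
Proof.
apply/I01E; rewrite /frac; split; first by rewrite subr_ge0 floor_le.
by have := floorD1_gt x; rewrite intrD; lra.
Qed.

Lemma frac_itv x : 0 <= frac x < 1.
Proof. by have /I01E [-> ->] := frac_I01 x. Qed.

Lemma frac_id x : 0 <= x < 1 -> frac x = x.
Proof. by move=> h; rewrite /frac (@floor_def _ x 0) ?subr0 // add0r. Qed.

Lemma fracDz x (z : int) : frac (x + z%:~R) = frac x.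
Proof. by rewrite /frac floorDrz // intrKfloor intrD; ring. Qed.

Lemma frac_fracD x c : frac (frac x + c) = frac (x + c).
Proof.
rewrite /frac [in LHS](_ : x - _ + c = x + c + (- Num.floor x)%:~R); last first.
  by rewrite intrN; ring.
by rewrite -/(frac (x + c + (- Num.floor x)%:~R)) fracDz.
Qed.

Definition rot (t : Rr) (A : set Rr) : set Rr := [set y | I01 y /\ A (frac (y - t))].

Lemma rotU t A B : rot t (A `|` B) = rot t A `|` rot t B.
Proof. by apply/seteqP; split => y /=; rewrite /rot /setU /=; tauto. Qed.

Lemma rotI t A B : rot t (A `&` B) = rot t A `&` rot t B.
Proof. by apply/seteqP; split => y /=; rewrite /rot /setI /=; tauto. Qed.

Lemma rotD t A B : rot t (A `\` B) = rot t A `\` rot t B.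
Proof. by apply/seteqP; split => y /=; rewrite /rot /setD /=; tauto. Qed.

Lemma rotI01 t : rot t I01 = I01.
Proof.
by apply/seteqP; split => y /=; rewrite /rot /=; [tauto | split => //; exact: frac_I01].
Qed.

Lemma rotC t A : rot t (I01 `\` A) = I01 `\` rot t A.
Proof. by rewrite rotD rotI01. Qed.

Lemma rot0 t : rot t set0 = set0.
Proof. by apply/seteqP; split => y /=; rewrite /rot /=; tauto. Qed.

Lemma rot_symd t A B : rot t (symd A B) = symd (rot t A) (rot t B).
Proof. by rewrite /symd rotU !rotD. Qed.

Lemma rot_rot s t A : rot s (rot t A) = rot (t + s) A.
Proof.
apply/seteqP; split => y /=; rewrite /rot /=.
- by move=> [hy [_ h]]; split => //; move: h; rewrite frac_fracD; congr A; congr frac; ring.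
- move=> [hy h]; split => //; split; first exact: frac_I01.
  by rewrite frac_fracD; move: h; congr A; congr frac; ring.
Qed.

Lemma rot_id A : A `<=` I01 -> rot 0 A = A.
Proof.
move=> sA; apply/seteqP; split => y /=; rewrite /rot /= subr0.
- by move=> [/I01E [h1 h2]]; rewrite frac_id ?h1 ?h2.
- move=> h; have /I01E [h1 h2] := sA _ h.
  by rewrite frac_id ?h1 ?h2 //; split => //; exact: sA.
Qed.

Lemma rotDz t (z : int) A : rot (t + z%:~R) A = rot t A.
Proof.
apply/seteqP; split => y /=; rewrite /rot /=;
  by rewrite (_ : y - (t + z%:~R) = (y - t) + (- z)%:~R) ?fracDz // intrN; ring.
Qed.

Lemma rot_frac t A : rot t A = rot (frac t) A.
Proof. by rewrite -(rotDz (frac t) (Num.floor t)) /frac subrK. Qed.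

Lemma rot_translates t A : 0 <= t < 1 ->
  rot t A = ((fun y => y + (- t)) @^-1` (A `&` `[0, 1 - t[%classic)) `|`
            ((fun y => y + (1 - t)) @^-1` (A `&` `[1 - t, 1[%classic)).
Proof.
move=> /andP[t0 t1]; apply/seteqP; split => y /=; rewrite /rot /= ?in_itv /=.
- move=> [/I01E [y0 y1] hA]; have [ty|yt] := leP t y.
  + left; rewrite frac_id in hA; last by apply/andP; lra.
    by split => //; apply/andP; lra.
  + right; rewrite -(fracDz _ 1) frac_id in hA; last by apply/andP; lra.
    by split; [move: hA; congr A; ring | apply/andP; lra].
- case=> -[hA /andP [h1 h2]].
  + split; first by apply/I01E; lra.
    by rewrite frac_id; [move: hA; congr A; ring | apply/andP; lra].
  + split; first by apply/I01E; lra.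
    by rewrite -(fracDz _ 1) frac_id; [move: hA; congr A; ring | apply/andP; lra].
Qed.

Lemma msub_rot t A : msub A -> msub (rot t A).
Proof.
move=> [mA sA]; split; last by move=> y [].
rewrite rot_frac rot_translates; last exact: frac_itv.
by apply: measurableU; apply: measurable_addr_preimage;
  apply: measurableI => //; exact: measurable_itv.
Qed.

Lemma lam_rot t A : msub A -> lam (rot t A) = lam A.
Proof.
move=> [mA sA]; rewrite rot_frac rot_translates; last exact: frac_itv.
have := frac_itv t; set u := frac t => /andP[u0 u1].
set A1 := A `&` `[0, 1 - u[%classic; set A2 := A `&` `[1 - u, 1[%classic.
have m1 : measurable A1 by apply: measurableI => //; exact: measurable_itv.
have m2 : measurable A2 by apply: measurableI => //; exact: measurable_itv.
set S1 := (fun y => y + - u) @^-1` A1; set S2 := (fun y => y + (1 - u)) @^-1` A2.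
have dS : S1 `&` S2 = set0.
  apply/seteqP; split => y //; rewrite /S1 /S2 /A1 /A2 /= !in_itv /=.
  by move=> -[[_ /andP[h1 h2]] [_ /andP[h3 h4]]]; lra.
have dA : A1 `&` A2 = set0.
  apply/seteqP; split => y //; rewrite /A1 /A2 /= !in_itv /=.
  by move=> -[[_ /andP[h1 h2]] [_ /andP[h3 h4]]]; lra.
have eS : lam (S1 `|` S2) = (lam S1 + lam S2)%E :=
  measureU lam (measurable_addr_preimage _ m1) (measurable_addr_preimage _ m2) dS.
have eA : lam (A1 `|` A2) = (lam A1 + lam A2)%E := measureU lam m1 m2 dA.
rewrite eS /S1 /S2 !lam_addr_preimage // -eA; congr lam; apply/seteqP; split => y.
- by case=> -[].
- move=> hA; have /I01E [y0 y1] := sA _ hA; rewrite /A1 /A2 /= !in_itv /=.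
  by have [h|h] := ltP y (1 - u); [left|right]; split => //; apply/andP; lra.
Qed.

Lemma lam_eqv_rot t A B : msub A -> msub B -> lam_eqv A B -> lam_eqv (rot t A) (rot t B).
Proof. by move=> hA hB; rewrite /lam_eqv -rot_symd lam_rot //; exact: msub_symd. Qed.
(** * The measure algebra of [0,1) *)

Definition canon (A : set Rr) : set Rr :=
  epsilon (inhabits set0) (fun B => msub B /\ lam_eqv A B).

Lemma canon_spec A : msub A -> msub (canon A) /\ lam_eqv A (canon A).
Proof.
move=> hA; apply: (epsilon_spec (inhabits set0) (fun B => msub B /\ lam_eqv A B)).
by exists A; split => //; exact: lam_eqv_refl.
Qed.

Lemma canon_eq A B : msub A -> msub B -> lam_eqv A B -> canon A = canon B.
Proof.
move=> hA hB hAB; rewrite /canon; congr epsilon.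
apply: funext => C; apply: propext; split => -[hC h]; split => //.
- exact: (lam_eqv_trans hB hA hC (lam_eqv_sym hAB) h).
- exact: (lam_eqv_trans hA hB hC hAB h).
Qed.

(* The measure algebra of [0,1): an element is the representative chosen by
   [canon] in a class of measurable subsets of [0,1) modulo null sets. *)
Definition malg := {A : set Rr | exists B, msub B /\ A = canon B}.

Notation rep := (@proj1_sig _ _).

(* Sets that are not measurable subsets of [0,1) are sent to the zero class. *)
Definition msub_or0 (A : set Rr) : set Rr :=
  if pselect (msub A) is left _ then A else set0.

Lemma msub_or0_msub A : msub (msub_or0 A).
Proof. by rewrite /msub_or0; case: pselect => // _; exact: msub0. Qed.

Lemma msub_or0E A : msub A -> msub_or0 A = A.
Proof. by rewrite /msub_or0; case: pselect. Qed.

Definition cls (A : set Rr) : malg :=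
  exist _ (canon (msub_or0 A)) (ex_intro _ (msub_or0 A) (conj (msub_or0_msub A) erefl)).

Lemma msub_rep (p : malg) : msub (rep p).
Proof. by case: p => /= A [B [hB ->]]; case: (canon_spec hB). Qed.

Lemma rep_inj (p q : malg) : rep p = rep q -> p = q.
Proof. by move=> h; apply: eq_sig_hprop => // x; apply: Prop_irrelevance. Qed.

Lemma cls_rep (p : malg) : cls (rep p) = p.
Proof.
apply: rep_inj; case: p => /= A [B [hB ->]].
have [hc hBc] := canon_spec hB.
rewrite msub_or0E //; exact: (canon_eq hc hB (lam_eqv_sym hBc)).
Qed.

Lemma cls_eq A B : msub A -> msub B -> lam_eqv A B -> cls A = cls B.
Proof. by move=> hA hB h; apply: rep_inj; rewrite /= !msub_or0E //; exact: canon_eq. Qed.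

Lemma rep_cls A : msub A -> lam_eqv (rep (cls A)) A.
Proof. by move=> hA; rewrite /= msub_or0E //; apply: lam_eqv_sym; case: (canon_spec hA). Qed.

Lemma cls_inj A B : msub A -> msub B -> cls A = cls B -> lam_eqv A B.
Proof.
move=> hA hB h.
have h1 := rep_cls hA; have h2 := rep_cls hB.
rewrite h in h1.
exact: (lam_eqv_trans hA (msub_rep (cls B)) hB (lam_eqv_sym h1) h2).
Qed.

Lemma cls_congr A B P Q : msub A -> msub B -> msub P -> msub Q ->
  symd A B `<=` symd P Q -> lam_eqv P Q -> cls A = cls B.
Proof.
move=> hA hB hP hQ sub h; apply: cls_eq => //.
exact: (lam_subset0 (msub_symd hA hB).1 (msub_symd hP hQ).1 sub h).
Qed.

Lemma lam_rep_cls A : msub A -> lam (rep (cls A)) = lam A.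
Proof. by move=> hA; apply: lam_eqv_lam => //; [exact: msub_rep|exact: rep_cls]. Qed.

Ltac msub_solve := repeat first [ assumption | apply: msub_rep | apply: msub0 | apply: msubI01
  | apply: msub_rot | apply: msubC | apply: msubD | apply: msubU | apply: msubI ].

Lemma clsUr X Y : msub X -> msub Y -> cls (X `|` rep (cls Y)) = cls (X `|` Y).
Proof.
move=> hX hY; have hV := msub_rep (cls Y).
apply: (cls_congr (msubU hX hV) (msubU hX hY) hV hY _ (rep_cls hY)).
set V := rep _; clearbody V; set_tauto.
Qed.

Lemma clsUl X Y : msub X -> msub Y -> cls (rep (cls Y) `|` X) = cls (Y `|` X).
Proof. by move=> hX hY; rewrite setUC clsUr // setUC. Qed.

Lemma clsIr X Y : msub X -> msub Y -> cls (X `&` rep (cls Y)) = cls (X `&` Y).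
Proof.
move=> hX hY; have hV := msub_rep (cls Y).
apply: (cls_congr (msubI hX hV) (msubI hX hY) hV hY _ (rep_cls hY)).
set V := rep _; clearbody V; set_tauto.
Qed.

Lemma clsIl X Y : msub X -> msub Y -> cls (rep (cls Y) `&` X) = cls (Y `&` X).
Proof. by move=> hX hY; rewrite setIC clsIr // setIC. Qed.

Lemma clsC X : msub X -> cls (I01 `\` rep (cls X)) = cls (I01 `\` X).
Proof.
move=> hX; have hV := msub_rep (cls X).
apply: (cls_congr (msubC hV) (msubC hX) hV hX _ (rep_cls hX)).
set V := rep _; clearbody V; set_tauto.
Qed.

Definition qjoin (p q : malg) := cls (rep p `|` rep q).
Definition qmeet (p q : malg) := cls (rep p `&` rep q).
Definition qcompl (p : malg) := cls (I01 `\` rep p).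
Definition qzero := cls set0.
Definition qone := cls I01.
Definition qmu (p : malg) : Rr := fine (lam (rep p)).

Lemma qjoinC p q : qjoin p q = qjoin q p.
Proof. by rewrite /qjoin setUC. Qed.

Lemma qmeetC p q : qmeet p q = qmeet q p.
Proof. by rewrite /qmeet setIC. Qed.

Lemma qjoinA a b c : qjoin a (qjoin b c) = qjoin (qjoin a b) c.
Proof.
have ha := msub_rep a; have hb := msub_rep b; have hc := msub_rep c.
rewrite /qjoin clsUr ?clsUl ?setUA //; by msub_solve.
Qed.

Lemma qmeetA a b c : qmeet a (qmeet b c) = qmeet (qmeet a b) c.
Proof.
have ha := msub_rep a; have hb := msub_rep b; have hc := msub_rep c.
rewrite /qmeet clsIr ?clsIl ?setIA //; by msub_solve.
Qed.

Lemma qjoinKmeet a b : qjoin a (qmeet a b) = a.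
Proof.
have ha := msub_rep a; have hb := msub_rep b.
rewrite /qjoin /qmeet clsUr //; try by msub_solve.
rewrite -[RHS](cls_rep a); congr cls; apply/seteqP; split; set_tauto.
Qed.

Lemma qmeetKjoin a b : qmeet a (qjoin a b) = a.
Proof.
have ha := msub_rep a; have hb := msub_rep b.
rewrite /qjoin /qmeet clsIr //; try by msub_solve.
rewrite -[RHS](cls_rep a); congr cls; apply/seteqP; split; set_tauto.
Qed.

Lemma qjoin_meetD a b c : qjoin a (qmeet b c) = qmeet (qjoin a b) (qjoin a c).
Proof.
have ha := msub_rep a; have hb := msub_rep b; have hc := msub_rep c.
rewrite /qjoin /qmeet clsUr ?clsIl ?clsIr //; try by msub_solve.
congr cls; apply/seteqP; split; set_tauto.
Qed.

Lemma qmeet_joinD a b c : qmeet a (qjoin b c) = qjoin (qmeet a b) (qmeet a c).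
Proof.
have ha := msub_rep a; have hb := msub_rep b; have hc := msub_rep c.
rewrite /qjoin /qmeet clsIr ?clsUl ?clsUr //; try by msub_solve.
congr cls; apply/seteqP; split; set_tauto.
Qed.

Lemma qjoin_compl a : qjoin a (qcompl a) = qone.
Proof.
have [ma sa] := msub_rep a.
rewrite /qjoin /qcompl /qone clsUr //; try by msub_solve.
congr cls; apply/seteqP; split => x; have := sa x; set_tauto_at x.
Qed.

Lemma qmeet_compl a : qmeet a (qcompl a) = qzero.
Proof.
have [ma sa] := msub_rep a.
rewrite /qmeet /qcompl /qzero clsIr //; try by msub_solve.
congr cls; apply/seteqP; split => x; have := sa x; set_tauto_at x.
Qed.

Lemma qmu_one : qmu qone = 1.
Proof. by rewrite /qmu /qone lam_rep_cls ?lam_I01 //; exact: msubI01. Qed.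

Lemma qmu_ge0 a : 0 <= qmu a.
Proof. exact/fine_ge0/lam_ge0. Qed.

Lemma qmu_add a b : qmeet a b = qzero -> qmu (qjoin a b) = qmu a + qmu b.
Proof.
have [ma sa] := msub_rep a; have [mb sb] := msub_rep b.
move=> h; have h0 : lam (rep a `&` rep b) = 0%E.
  rewrite -(symd0 (rep a `&` rep b)).
  by apply: cls_inj h; [exact: msubI | exact: msub0].
rewrite /qmu /qjoin lam_rep_cls; last by msub_solve.
have e1 : (rep a `|` rep b) = rep a `|` (rep b `\` rep a).
  by apply/seteqP; split; set_tauto.
have e2 : lam (rep a `|` (rep b `\` rep a)) = (lam (rep a) + lam (rep b `\` rep a))%E.
  apply: (measureU lam ma (measurableD mb ma)).
  by apply/seteqP; split; set_tauto.
have e3 : lam (rep b) = (lam (rep b `\` rep a) + lam (rep b `&` rep a))%E :=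
  measureDI lam mb ma.
rewrite setIC h0 adde0 in e3.
rewrite e1 e2 -e3 fineD //; exact: lam_fin.
Qed.

Lemma qmu_pos a : qmu a = 0 -> a = qzero.
Proof.
have ha := msub_rep a.
move=> h; rewrite -(cls_rep a) /qzero; apply: cls_eq => //; first exact: msub0.
by rewrite /lam_eqv symd0 -(fineK (lam_fin ha)) -[fine _]/(qmu a) h.
Qed.

Lemma cls_rot t Y : msub Y -> cls (rot t (rep (cls Y))) = cls (rot t Y).
Proof.
move=> hY; have hV := msub_rep (cls Y).
apply: cls_eq; [exact: msub_rot|exact: msub_rot|exact: lam_eqv_rot (rep_cls hY)].
Qed.

(** * Completeness, atomlessness and aperiodicity *)

Definition lam_dist (A B : set Rr) : Rr := fine (lam (symd A B)).

Lemma lam_distC A B : lam_dist A B = lam_dist B A.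
Proof. by rewrite /lam_dist symdC. Qed.

Lemma lam_dist_triangle A B C : msub A -> msub B -> msub C ->
  lam_dist A C <= lam_dist A B + lam_dist B C.
Proof.
move=> hA hB hC.
have [mAB _] := msub_symd hA hB; have [mBC _] := msub_symd hB hC.
have [mAC _] := msub_symd hA hC.
have f1 := lam_fin (msub_symd hA hB); have f2 := lam_fin (msub_symd hB hC).
rewrite /lam_dist -fineD //; apply: fine_le; first exact: lam_fin (msub_symd hA hC).
  by rewrite fin_numD f1 f2.
apply: le_trans (measureU2 lam mAB mBC).
by apply: lam_le => //; [exact: measurableU | exact: symd_trans].
Qed.

Lemma lam_dist_eqv A B : lam_eqv A B -> lam_dist A B = 0.
Proof. by rewrite /lam_dist /lam_eqv => ->. Qed.

Lemma lam_symd_le_of_dist_lt A B (r : Rr) : msub A -> msub B ->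
  lam_dist A B < r -> (lam (symd A B) <= r%:E)%E.
Proof.
move=> hA hB h; rewrite -(fineK (lam_fin (msub_symd hA hB))) lee_fin; exact: ltW.
Qed.

Lemma lam_dist_cls X Y : msub X -> msub Y ->
  lam_dist (rep (cls X)) (rep (cls Y)) = lam_dist X Y.
Proof.
move=> hX hY; have hX' := msub_rep (cls X); have hY' := msub_rep (cls Y).
have eX := lam_dist_eqv (rep_cls hX); have eY := lam_dist_eqv (rep_cls hY).
have eX' : lam_dist X (rep (cls X)) = 0 by rewrite lam_distC.
have eY' : lam_dist Y (rep (cls Y)) = 0 by rewrite lam_distC.
have t1 := lam_dist_triangle hX' hX hY'; have t2 := lam_dist_triangle hX hY hY'.
have t3 := lam_dist_triangle hX hX' hY; have t4 := lam_dist_triangle hX' hY' hY.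
by apply/eqP; rewrite eq_le; apply/andP; split; lra.
Qed.

Lemma lam_dist_rot w X Y : msub X -> msub Y ->
  lam_dist (rot w X) (rot w Y) = lam_dist X Y.
Proof. by move=> hX hY; rewrite /lam_dist -rot_symd lam_rot //; exact: msub_symd. Qed.

Lemma symd_telescope (B : nat -> set Rr) K x m :
  (B K x /\ ~ B (K + m)%N x) \/ (~ B K x /\ B (K + m)%N x) ->
  exists i, (i < m)%N /\ symd (B (K + i)%N) (B (K + i).+1) x.
Proof.
elim: m => [|m IH]; first by rewrite addn0; tauto.
rewrite addnS => h; have [P|P] := classic (B (K + m)%N x).
- case: h => -[h1 h2].
  + by exists m; split => //; left.
  + have [i [hi hD]] := IH (or_intror (conj h1 P)).
    by exists i; split => //; exact: ltnW.
- case: h => -[h1 h2].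
  + have [i [hi hD]] := IH (or_introl (conj h1 P)).
    by exists i; split => //; exact: ltnW.
  + by exists m; split => //; right.
Qed.

(* The limit of a fast Cauchy sequence of sets is its lim inf: a point of the
   symmetric difference with B K lies in that of some later B i and B i.+1. *)
Lemma lam_fast_cauchy_limit (B : nat -> set Rr) : (forall k, msub (B k)) ->
  (forall k, (lam (symd (B k) (B k.+1)) <= (1 / (2 ^ k.+1)%:R)%:E)%E) ->
  exists2 L, msub L & forall K, (lam (symd (B K) L) <= (1 / (2 ^ K)%:R)%:E)%E.
Proof.
move=> hB hD.
pose L := \bigcup_k (\bigcap_j B (k + j)%N).
have mL : measurable L.
  by apply: bigcupT_measurable => k; apply: bigcapT_measurable => j; exact: (hB _).1.
have sL : L `<=` I01 by move=> x [k _ /(_ 0%N I)]; rewrite addn0 => /(hB k).2.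
exists L => // K.
pose F i := symd (B (K + i)%N) (B (K + i).+1).
have mF i : measurable (F i) by exact: (msub_symd (hB _) (hB _)).1.
have mS : measurable (symd (B K) L) by exact: (msub_symd (hB _) (conj mL sL)).1.
have sub : symd (B K) L `<=` \bigcup_i F i.
  move=> x [[hx hL]|[hL hx]].
  - have [m hm] : exists m, ~ B (K + m)%N x.
      apply: NNPP => hn; apply: hL; exists K => // j _.
      by apply: NNPP => hj; apply: hn; exists j.
    by have [i [_ hi]] := symd_telescope (or_introl (conj hx hm)); exists i.
  - case: hL => k _ hk.
    have hm : B (K + k)%N x by rewrite addnC; exact: hk.
    by have [i [_ hi]] := symd_telescope (or_intror (conj hx hm)); exists i.
apply: le_trans (measure_sigma_subadditive lam mF mS sub) _.
apply: le_trans (epsilon_trick0 xpredT (_ : 0 <= 1 / (2 ^ K)%:R)); last first.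
  by rewrite divr_ge0 // ler0n.
apply: lee_nneseries => [i _ _|i _]; first exact: lam_ge0.
apply: le_trans (hD _) _; rewrite lee_fin -addnS expnD natrM.
by rewrite mul1r invfM // mul1r.
Qed.

Lemma exists_inv_nat_lt (m : Rr) : 0 < m -> exists2 n, (0 < n)%N & 1 / n%:R < m.
Proof.
move=> m0; exists (Num.truncn (1 / m)).+1 => //.
have h := truncnS_gt (1 / m).
by rewrite ltr_pdivrMr // in h; rewrite ltr_pdivrMr ?ltr0n // mulrC.
Qed.

Lemma ler_inv_nat (a b : nat) : (0 < a)%N -> (a <= b)%N -> 1 / b%:R <= 1 / a%:R :> Rr.
Proof.
move=> ha hab; rewrite !div1r lef_pV2 ?posrE ?ltr0n ?ler_nat //.
exact: leq_trans ha hab.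
Qed.

Lemma cauchy_fast_subseq (T : Type) (dist : T -> T -> Rr) (u : nat -> T) :
  (forall e, 0 < e -> exists N, forall m n, (N <= m)%N -> (N <= n)%N ->
     dist (u m) (u n) < e) ->
  exists nk : nat -> nat, (forall k, (nk k <= nk k.+1)%N) /\
    forall k m n, (nk k <= m)%N -> (nk k <= n)%N -> dist (u m) (u n) < 1 / (2 ^ k.+1)%:R.
Proof.
move=> hC.
have hN_ex k : exists Nk, forall m n, (Nk <= m)%N -> (Nk <= n)%N ->
    dist (u m) (u n) < 1 / (2 ^ k.+1)%:R.
  by apply: hC; rewrite divr_gt0 // ltr0n expn_gt0.
have [N hN] := boolp.choice hN_ex.
pose nk := fix nk k := if k is k'.+1 then maxn (nk k') (N k) else N 0.
have hNk k : (N k <= nk k)%N by case: k => //= k; exact: leq_maxr.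
exists nk; split => [k|k m n hm hn]; first exact: leq_maxl.
by apply: hN; apply: leq_trans (hNk k) _.
Qed.

Definition cell (n i : nat) : set Rr := `[i%:R / n%:R, i.+1%:R / n%:R[%classic.

Lemma cellE n i y : cell n i y <-> i%:R / n%:R <= y /\ y < i%:R / n%:R + 1 / n%:R.
Proof. by rewrite /cell /= in_itv /= -natr1 mulrDl mul1r; split => [/andP[]|[-> ->]]. Qed.

Lemma lam_cell_le n i : (0 < n)%N -> (lam (cell n i) <= (1 / n%:R)%:E)%E.
Proof.
move=> n0; rewrite /cell lebesgue_measure_itv /= lte_fin.
case: ifP => _; rewrite ?lee_fin -?natr1 ?mulrDl; first lra.
by rewrite divr_ge0 // ler0n.
Qed.

Lemma exists_cell_meet_pos A n : msub A -> (0 < lam A)%E -> (0 < n)%N ->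
  exists2 i, (i < n)%N & (0 < lam (A `&` cell n i))%E.
Proof.
move=> [mA sA] hpos n0; apply: NNPP => hn.
have null_cell i : (i < n)%N -> lam (A `&` cell n i) = 0%E.
  move=> hi; apply/eqP; rewrite eq_le lam_ge0 andbT leNgt; apply/negP => h.
  by apply: hn; exists i.
have mI k : measurable (A `&` `[0, k%:R / n%:R[%classic).
  by apply: measurableI => //; exact: measurable_itv.
have mC i : measurable (A `&` cell n i) by apply: measurableI => //; exact: measurable_itv.
have null_init k : (k <= n)%N -> lam (A `&` `[0, k%:R / n%:R[%classic) = 0%E.
  elim: k => [|k IH] hk.
    rewrite mul0r (_ : _ `&` _ = set0) ?measure0 //; apply/seteqP; split => y //=.
    by rewrite in_itv /= => -[_ /andP[h1 /(le_lt_trans h1)]]; rewrite ltxx.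
  apply: (@lam_subset0 _ ((A `&` `[0, k%:R / n%:R[%classic) `|` (A `&` cell n k))).
  - exact: mI.
  - exact: measurableU.
  - move=> y [hA]; rewrite /= in_itv /= => /andP[h1 h2].
    have [hy|hy] := ltP y (k%:R / n%:R); [left|right]; split => //.
      by rewrite /= in_itv /= h1 hy.
    by rewrite /cell /= in_itv /= hy h2.
  - apply: null_set_setU; [exact: mI | exact: mC | | exact: null_cell].
    by apply: IH; exact: ltnW.
have := null_init n (leqnn n); rewrite divff ?pnatr_eq0 -?lt0n //.
rewrite (_ : _ `&` _ = A) => [h|]; first by rewrite h ltxx in hpos.
by apply/seteqP; split => [y []|y hA] //; split => //; exact: sA.
Qed.

(* A common point y would make floor (y - frac t) an integer strictly between
   -1 and 0. *)
Lemma rot_cell_disjoint t P n i : 1 / n%:R <= frac t -> frac t + 1 / n%:R <= 1 ->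
  P `<=` cell n i -> rot t P `&` P = set0.
Proof.
move=> h1 h2 sP; apply/seteqP; split => y //=; rewrite rot_frac /rot /=.
move=> [[_ hx] hy]; move: (sP _ hx) (sP _ hy) => /cellE [x1 x2] /cellE [y1 y2].
move: x1 x2; set u := frac t; rewrite {1 2}/frac => x1 x2; rewrite -/u in h1 h2; clearbody u.
set z := Num.floor (y - u).
have : ((-1 : int) < z)%R by rewrite -(ltr_int Rr) intrN; lra.
have : (z < 0)%R by rewrite -(ltr_int Rr); lra.
lia.
Qed.

Lemma lam_rep_gt0 (a : malg) : a <> qzero -> (0 < lam (rep a))%E.
Proof.
move=> ha; have hA := msub_rep a; rewrite -(fineK (lam_fin hA)) lte_fin.
rewrite lt_neqAle qmu_ge0 andbT; apply/eqP => h; apply: ha.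
exact: qmu_pos (esym h).
Qed.

Lemma msub_rep_cell (a : malg) n i : msub (rep a `&` cell n i).
Proof. by apply: msubIl; [exact: msub_rep | exact: measurable_itv]. Qed.

Section RotationAlgebra.
Variable alpha : Rr.

Definition qtau (p : malg) := cls (rot alpha (rep p)).
Definition qtau_inv (p : malg) := cls (rot (- alpha) (rep p)).

Definition rot_alg : PAops := {| car := malg; bzero := qzero; bone := qone;
  bcompl := qcompl; bjoin := qjoin; bmeet := qmeet; mu := qmu;
  tau := qtau; tau_inv := qtau_inv |}.

Lemma pdist_rot_alg (p q : rot_alg) : pdist p q = lam_dist (rep p) (rep q).
Proof.
have [mp sp] := msub_rep p; have [mq sq] := msub_rep q.
rewrite /pdist /= /qmu /qjoin /qmeet /qcompl.
rewrite clsIr ?clsIl ?clsUl ?clsUr; try by msub_solve.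
rewrite lam_rep_cls; last by msub_solve.
rewrite /lam_dist; congr (fine (lam _)).
by apply/seteqP; split => x; have := sp x; have := sq x; set_tauto_at x.
Qed.

Lemma cls_rot0 B : msub B -> cls (rot 0 B) = cls B.
Proof. by move=> [mB sB]; rewrite rot_id. Qed.

Lemma iter_tau_cls k B : msub B ->
  iter k (tau rot_alg) (cls B) = cls (rot (k%:R * alpha) B).
Proof.
move=> hB; elim: k => [|k IH] /=; first by rewrite mul0r cls_rot0.
rewrite IH /qtau cls_rot; last exact: msub_rot.
by rewrite rot_rot -natr1 mulrDl mul1r.
Qed.

Lemma cell_meet_ble (a : rot_alg) n i : ble (cls (rep a `&` cell n i) : rot_alg) a.
Proof.
rewrite /ble /= /qmeet clsIl; [|exact: msub_rep|exact: msub_rep_cell].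
by congr cls; apply/seteqP; split => x /=; rewrite /setI /=; tauto.
Qed.

Lemma rot_alg_atomless (a : rot_alg) : a <> bzero rot_alg ->
  exists b : rot_alg, ble b a /\ 0 < mu rot_alg b /\ mu rot_alg b < mu rot_alg a.
Proof.
move=> /lam_rep_gt0 hl; have hA := msub_rep a.
have qa : 0 < qmu a by rewrite -lte_fin fineK //; exact: lam_fin.
have [n n0 hn] := exists_inv_nat_lt qa.
have [i hi hP] := exists_cell_meet_pos hA hl n0.
have hPs := msub_rep_cell a n i.
exists (cls (rep a `&` cell n i)); split; first exact: cell_meet_ble.
rewrite /= /qmu lam_rep_cls //; split.
  by rewrite -lte_fin fineK //; exact: lam_fin.
apply: le_lt_trans hn; rewrite -lee_fin fineK; last exact: lam_fin.
apply: le_trans (lam_cell_le i n0).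
by apply: lam_le; [exact: hPs.1 | exact: measurable_itv | move=> x []].
Qed.

(* k alpha is not an integer, so the rotation by k alpha moves every piece of a
   short enough cell off itself. *)
Lemma rot_alg_aperiodic :
  (forall k : nat, (0 < k)%N -> forall z : int, k%:R * alpha != z%:~R) ->
  forall a : rot_alg, a <> bzero rot_alg -> forall k : nat, (0 < k)%N ->
  exists b : rot_alg, ble b a /\ iter k (tau rot_alg) b <> b.
Proof.
move=> irr a /lam_rep_gt0 hl k k0; have hA := msub_rep a.
set t := k%:R * alpha.
have /andP [u0 u1] := frac_itv t.
have upos : 0 < frac t.
  rewrite lt_neqAle u0 andbT; apply/eqP => /esym h.
  move: (irr k k0 (Num.floor t)); rewrite -/t.
  by rewrite /frac in h; rewrite {1}(subr0_eq h) eqxx.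
have hmin : 0 < Num.min (frac t) (1 - frac t) by rewrite lt_min upos subr_gt0.
have [n n0 hn] := exists_inv_nat_lt hmin.
rewrite lt_min in hn; move/andP: hn => [hn1 hn2].
have [i hi hP] := exists_cell_meet_pos hA hl n0.
have hPs := msub_rep_cell a n i; set P := rep a `&` cell n i in hP hPs *.
exists (cls P); split; first exact: cell_meet_ble.
rewrite iter_tau_cls // => /(cls_inj (msub_rot t hPs) hPs) he.
have hn2' : frac t + 1 / n%:R <= 1 by lra.
have hd := @rot_cell_disjoint t P n i (ltW hn1) hn2' (fun x hx => hx.2).
suff : lam P = 0%E by move=> h0; rewrite h0 ltxx in hP.
apply: (lam_subset0 _ _ _ he); [exact: hPs.1 | exact: (msub_symd (msub_rot t hPs) hPs).1 |].
move=> x hx; right; split => // hr.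
by have : (rot t P `&` P) x by []; rewrite hd.
Qed.

Lemma rot_alg_complete (u : nat -> rot_alg) :
    (forall e : Rr, 0 < e -> exists N, forall m n, (N <= m)%N -> (N <= n)%N ->
        pdist (u m) (u n) < e) ->
    exists a : rot_alg, forall e : Rr, 0 < e -> exists N, forall n, (N <= n)%N ->
        pdist (u n) a < e.
Proof.
move=> /cauchy_fast_subseq [nk [nk_mono hnk]].
pose B k := rep (u (nk k)).
have hB k : msub (B k) by exact: msub_rep.
have [L hL hLK] : exists2 L, msub L &
    forall K, (lam (symd (B K) L) <= (1 / (2 ^ K)%:R)%:E)%E.
  apply: lam_fast_cauchy_limit => // k; apply: lam_symd_le_of_dist_lt => //.
  by rewrite -pdist_rot_alg; apply: hnk.
exists (cls L) => e e0.
have he : 0 < e / 2 by lra.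
have [K K0 hK] := exists_inv_nat_lt he.
exists (nk K) => n hn.
have h2K : 1 / (2 ^ K)%:R <= 1 / K%:R :> Rr.
  by apply: ler_inv_nat => //; exact/ltnW/ltn_expl.
have h2K1 : 1 / (2 ^ K.+1)%:R <= 1 / (2 ^ K)%:R :> Rr.
  by apply: ler_inv_nat; rewrite ?expn_gt0 // expnS leq_pmull.
have hun := msub_rep (u n); have hV := msub_rep (cls L).
have t1 := lam_dist_triangle hun (hB K) hV.
have t2 := lam_dist_triangle (hB K) hL hV.
have e1 : lam_dist L (rep (cls L)) = 0.
  by apply: lam_dist_eqv; exact/lam_eqv_sym/rep_cls.
have e2 : lam_dist (rep (u n)) (B K) < 1 / (2 ^ K.+1)%:R.
  by rewrite /B -pdist_rot_alg; apply: hnk.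
have e3 : lam_dist (B K) L <= 1 / (2 ^ K)%:R.
  by rewrite /lam_dist -lee_fin fineK ?hLK //; exact: lam_fin (msub_symd (hB K) hL).
rewrite pdist_rot_alg; lra.
Qed.

Lemma rot_alg_APrA :
  (forall k : nat, (0 < k)%N -> forall z : int, k%:R * alpha != z%:~R) ->
  is_APrA_model rot_alg.
Proof.
move=> irr; split.
- exact: qjoinC.
- exact: qmeetC.
- exact: qjoinA.
- exact: qmeetA.
- exact: qjoinKmeet.
- exact: qmeetKjoin.
- exact: qjoin_meetD.
- exact: qmeet_joinD.
- exact: qjoin_compl.
- exact: qmeet_compl.
- exact: qmu_one.
- exact: qmu_ge0.
- exact: qmu_add.
- exact: qmu_pos.
- exact: rot_alg_complete.
- exact: rot_alg_atomless.
- move=> a /=; rewrite /qtau /qtau_inv cls_rot ?rot_rot; last by msub_solve.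
  by rewrite addrN cls_rot0 ?cls_rep //; msub_solve.
- move=> a /=; rewrite /qtau /qtau_inv cls_rot ?rot_rot; last by msub_solve.
  by rewrite addNr cls_rot0 ?cls_rep //; msub_solve.
- by rewrite /= /qtau /qzero cls_rot ?rot0 //; msub_solve.
- by rewrite /= /qtau /qone cls_rot ?rotI01 //; msub_solve.
- by move=> a /=; rewrite /qtau /qcompl cls_rot ?clsC ?rotC //; msub_solve.
- by move=> a b /=; rewrite /qtau /qjoin cls_rot ?clsUl ?clsUr ?rotU //; msub_solve.
- by move=> a b /=; rewrite /qtau /qmeet cls_rot ?clsIl ?clsIr ?rotI //; msub_solve.
- by move=> a /=; rewrite /qmu /qtau lam_rep_cls ?lam_rot //; msub_solve.
- exact: rot_alg_aperiodic.
Qed.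

End RotationAlgebra.

(** * Realizing pi_s *)

Definition half_itv : set Rr := `[0, 2^-1[%classic.

Lemma msub_half_itv : msub half_itv.
Proof.
split; first exact: measurable_itv.
by move=> x; rewrite /half_itv /= in_itv /= => /andP[h1 h2]; apply/I01E; lra.
Qed.

Lemma rot_half_itv : rot (2^-1) half_itv = I01 `\` half_itv.
Proof.
apply/seteqP; split => y /=; rewrite /rot /half_itv /= in_itv /=.
- move=> [/I01E [y0 y1]]; have [h|h] := leP (2^-1) y.
  + rewrite frac_id; last by apply/andP; lra.
    by move=> _; split; [apply/I01E | rewrite in_itv /=]; lra.
  + rewrite -(fracDz _ 1) frac_id; last by apply/andP; lra.
    by move=> /andP[]; lra.
- move=> [/I01E [y0 y1]]; rewrite in_itv /= => /negP; rewrite negb_and -!ltNge => h.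
  split; first by apply/I01E.
  by rewrite frac_id; apply/andP; lra.
Qed.

Lemma lam_dist_half_itv_compl : lam_dist half_itv (I01 `\` half_itv) = 1.
Proof.
have [_ sA] := msub_half_itv.
rewrite /lam_dist (_ : symd _ _ = I01) ?lam_I01 //.
by apply/seteqP; split => x; have := sA x; set_tauto_at x.
Qed.

Lemma lam_dist_half_itv_rot v : 0 <= v <= 2^-1 ->
  lam_dist half_itv (rot v half_itv) <= 2 * v.
Proof.
move=> /andP[v0 v1].
have hR := msub_rot v msub_half_itv.
rewrite /lam_dist -lee_fin fineK; last exact: lam_fin (msub_symd msub_half_itv hR).
have sub : symd half_itv (rot v half_itv) `<=`
    `[0, v[%classic `|` `[2^-1, 2^-1 + v[%classic.
  move=> y; rewrite /symd /rot /half_itv /= !in_itv /=.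
  case=> -[h1 h2].
  - left; move/andP: h1 => [y0 y1]; apply/andP; split => //; rewrite ltNge; apply/negP => hv.
    apply: h2; split; first by apply/I01E; lra.
    by rewrite frac_id; apply/andP; lra.
  - right; move: h1 => [/I01E [y0 y1]]; move/negP: h2; rewrite negb_and -!ltNge => h2.
    have hy : 2^-1 <= y by case/orP: h2 => h; lra.
    by rewrite frac_id; [move=> /andP [_ h3]; apply/andP; lra | apply/andP; lra].
apply: le_trans (lam_le _ _ sub) _.
- exact: (msub_symd msub_half_itv hR).1.
- by apply: measurableU; exact: measurable_itv.
pose S1 : set Rr := `[0, v[%classic; pose S2 : set Rr := `[2^-1, 2^-1 + v[%classic.
have hU : (lam (S1 `|` S2) <= lam S1 + lam S2)%E :=
  measureU2 lam (measurable_itv _) (measurable_itv _).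
apply: le_trans hU _.
rewrite /S1 /S2 !lebesgue_measure_itv /= !lte_fin.
by case: ifP => _; case: ifP => _; rewrite ?adde0 ?add0e -?EFinD ?lee_fin; lra.
Qed.

Definition half_elt alpha : rot_alg alpha := cls half_itv.

(* Rotating by 1/2 maps [0,1/2) onto its complement, so the case b = 1 follows
   from the case b = 0 by the triangle inequality. *)
Lemma pdist_half_itv_iter alpha (b : bool) v (z : int) m :
  0 <= v <= 2^-1 -> m%:R * alpha = v + (b : nat)%:R / 2 + z%:~R ->
  if b then 1 - 2 * v <= pdist (half_elt alpha) (iter m (tau _) (half_elt alpha))
  else pdist (half_elt alpha) (iter m (tau _) (half_elt alpha)) <= 2 * v.
Proof.
move=> hv hm; have hA := msub_half_itv.
rewrite /half_elt iter_tau_cls // pdist_rot_alg lam_dist_cls //; last exact: msub_rot.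
have b1 := lam_dist_half_itv_rot hv.
rewrite hm rotDz; case: b {hm} => /=; last by rewrite mul0r addr0.
rewrite div1r (addrC v) -rot_rot rot_half_itv.
have hC := msubC hA; have hR := msub_rot v hC.
have eRC : lam_dist (rot v (I01 `\` half_itv)) (I01 `\` half_itv) =
    lam_dist half_itv (rot v half_itv).
  rewrite lam_distC -rot_half_itv rot_rot addrC -rot_rot lam_dist_rot //.
  exact: msub_rot.
have := lam_dist_triangle hA hR hC.
rewrite lam_dist_half_itv_compl eRC; lra.
Qed.

Lemma rat_add_pi_div_irrational (q d : rat) k (z : int) : d != 0 -> (0 < k)%N ->
  k%:R * (ratr q + pi / ratr d) != z%:~R :> Rr.
Proof.
move=> d0 k0; apply/negP => /eqP h; apply: (@pi_irrationnal Rr).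
have d0' : ratr d != 0 :> Rr by rewrite fmorph_eq0.
have k0' : k%:R != 0 :> Rr by rewrite pnatr_eq0 -lt0n.
exists ((z%:~R / k%:R - q) * d) => //.
rewrite rmorphM rmorphB fmorph_div /= ratr_int ratr_nat -h.
by field; rewrite k0' d0'.
Qed.

Fixpoint base16 (s : seq bool) : Rr :=
  if s is b :: s' then (8 * (b : nat)%:R + base16 s') / 16 else 0.

Lemma base16_bounds s : 0 <= base16 s <= 9 / 16.
Proof.
elim: s => [|b s /andP[h1 h2]] /=; first by rewrite lexx /=; lra.
have [b0 b1] : (0 <= (b : nat)%:R :> Rr) /\ ((b : nat)%:R <= 1 :> Rr).
  by case: b => /=; split; lra.
by apply/andP; lra.
Qed.

Lemma base16_rat s : exists q : rat, base16 s = ratr q.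
Proof.
elim: s => [|b s [q hq]] /=; first by exists 0; rewrite rmorph0.
exists ((8 * (b : nat)%:R + q) / 16).
by rewrite fmorph_div rmorphD rmorphM /= !ratr_nat hq.
Qed.

Lemma base16_shift k s :
  exists z : int, (16 ^ k)%:R * base16 s = z%:~R + base16 (drop k s).
Proof.
elim: k s => [|k IH] s; first by exists 0; rewrite drop0 expn0 mul1r add0r.
case: s => [|b s] /=; first by exists 0; rewrite mulr0 add0r.
have [z hz] := IH s; exists (z + (16 ^ k * 8 * (b : nat))%N%:Z).
have hz' : base16 (drop k s) = (16 ^ k)%:R * base16 s - z%:~R by rewrite hz; ring.
rewrite hz' intrD -!pmulrn !natrM !natrX exprS.
by field.
Qed.

(* The perturbation by a multiple of pi makes the angle irrational while keeping
   16^k angle within 1/16 of (s_k)/2 modulo 1 for every k < |s|. *)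
Definition angle (s : seq bool) : Rr := base16 s + pi / (1000 * (16 ^ size s)%:R).

Lemma angle_irrational s k : (0 < k)%N -> forall z : int, k%:R * angle s != z%:~R.
Proof.
move=> k0 z; rewrite /angle; have [q ->] := base16_rat s.
pose d : rat := 1000 * (16 ^ size s)%:R.
have -> : 1000 * (16 ^ size s)%:R = ratr d :> Rr by rewrite rmorphM /= !ratr_nat.
apply: (@rat_add_pi_div_irrational q d k z _ k0).
by rewrite mulf_eq0 negb_or !pnatr_eq0 expn_eq0.
Qed.

Lemma mul_pow16_angle s k : (k < size s)%N -> exists v (z : int),
  [/\ 0 <= v, v <= 16^-1 &
      (16 ^ k)%:R * angle s = v + (nth false s k : nat)%:R / 2 + z%:~R].
Proof.
move=> hk; have [z hz] := base16_shift k s.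
have hd : drop k s = nth false s k :: drop k.+1 s by exact: drop_nth.
set a := (16 ^ k)%:R : Rr; set b := (16 ^ size s)%:R : Rr.
exists (base16 (drop k.+1 s) / 16 + a * pi / (1000 * b)), z.
have /andP [h0 h1] := base16_bounds (drop k.+1 s).
have a0 : 0 < a by rewrite /a ltr0n expn_gt0.
have ab : a <= b by rewrite /a /b ler_nat leq_pexp2l // ltnW.
have b0 : 0 < b by apply: lt_le_trans ab.
have w0 : 0 <= a / b by rewrite divr_ge0 // ltW.
have w1 : a / b <= 1 by rewrite ler_pdivrMr // mul1r.
have ew : a * pi / (1000 * b) = a / b * pi / 1000 by field; rewrite gt_eqF.
have hp0 := pi_ge0 Rr; have hp4 := pihalf_lt2 Rr.
have wp : a / b * pi <= pi by rewrite ler_piMl.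
have wp0 := mulr_ge0 w0 hp0.
split; rewrite ?ew; try lra.
rewrite /angle mulrDr hz hd /=; field; by rewrite pnatr_eq0 expn_eq0.
Qed.

Lemma pi_of_consistent s : consistent (pi_of s).
Proof.
pose M := {| mops := rot_alg (angle s); maxioms := rot_alg_APrA (@angle_irrational s) |}.
exists M, (half_elt (angle s)); apply/realizes_pi_of => k hk.
have [v [z [v0 v1 hm]]] := mul_pow16_angle hk.
have hv : 0 <= v <= 2^-1 by apply/andP; lra.
have := pdist_half_itv_iter hv hm.
by rewrite /displaced; case: (nth false s k) => /=; lra.
Qed.

Local Close Scope classical_set_scope.

Theorem proposition3p4 :
  exists pi : seq bool -> ptype,
    (forall s : seq bool, one_var_ptype (pi s) /\ consistent (pi s)) /\
    (forall s : seq bool,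
        ptype_dist_ge (pi (rcons s false)) (pi (rcons s true)) (3%:R^-1 : Rr)) /\
    (forall s t : seq bool, prefix s t -> entails (pi t) (pi s)).
Proof.
exists pi_of; split; [|split].
- by move=> s; split; [exact: pi_of_one_var | exact: pi_of_consistent].
- exact: pi_of_rcons_dist_ge.
- exact: pi_of_prefix.
Qed.
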